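(* Let $E$ be a set and let the power group $G=2^E$ carry a gliding system in which any two independent glides are disjoint subsets of $E$. Let $\omega:X_G\to I^E$ be the evaluation map. Suppose that for any two different cubic sets of glides $S_1,S_2$ one has $[S_1]\ne[S_2]$. Suppose $\mathcal{D}\subset G$ is such that every glide $s$ admits a partition $s=s'\sqcup s''$ into two nonempty subsets with the property that whenever $A\in\mathcal{D}$ and $sA\in\mathcal{D}$, the set $s\cap A$ equals $s'$ or $s''$. Then the restriction of $\omega$ to $X_{\mathcal{D}}\subset X_G$ is injective.
   Context: $2^E$ is the group of subsets of $E$ with product $AB=(A\cup B)\setminus(A\cap B)$; every element is its own inverse. A gliding system in $G$ is a pair $(\mathcal{G},\mathcal{I})$, $\mathcal{G}\subset G\setminus\{\emptyset\}$ (glides), $\mathcal{I}\subset\mathcal{G}\times\mathcal{G}$ symmetric (independence) with $st=ts\ne\emptyset$ for $(s,t)\in\mathcal{I}$. A cubic set of glides is a finite set $S$ of pairwise independent glides with $[T_1]\ne[T_2]$ for distinct $T_1,T_2\subset S$, where $[T]=\prod_{t\in T}t$ (here the union, since independent glides are disjoint). The glide complex $X_G$ is the cubed complex obtained from the cubes $I^S$ (points $(A,S,x)$, $A\in G$, $S$ cubic, $x:S\to I=[0,1]$) modulo the equivalence generated by $(A,S,x)\sim(A,S',x')$ when $S\subset S'$, $x'|_S=x$, $x'(S'\setminus S)=0$, and $(A,S,x)\sim([T]A,S,x')$ when $T\subset S$, $x'=x$ on $S\setminus T$, $x'(t)=1-x(t)$ for $t\in T$. For $\mathcal{D}\subset G$,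 $X_{\mathcal{D}}$ is the subcomplex of cubes all of whose vertices $[T]A$ ($T\subset S$) lie in $\mathcal{D}$. For $A\subset E$ let $\delta_A:E\to\{0,1\}$ be its characteristic function. The evaluation map is $\omega(A,S,x)=\delta_A+(1-2\delta_A)\sum_{s\in S}x(s)\delta_s$; explicitly $\omega(a)(e)=\delta_A(e)$ for $e\notin\bigcup_{s\in S}s$, $=x(s)$ for $e\in s\setminus A$, and $=1-x(s)$ for $e\in s\cap A$ ($s\in S$). *)

From Stdlib Require Import Reals List Relations.
Import ListNotations.
Open Scope R_scope.

Definition subset (E : Type) := E -> bool.

(* group product in 2^E: symmetric difference *)
Definition sdiff {E : Type} (A B : subset E) : subset E := fun e => xorb (A e) (B e).
Definition emptyset {E : Type} : subset E := fun _ => false.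
Definition set_inter {E : Type} (A B : subset E) : subset E := fun e => andb (A e) (B e).
Definition set_union {E : Type} (A B : subset E) : subset E := fun e => orb (A e) (B e).
Definition set_disjoint {E : Type} (A B : subset E) : Prop :=
  forall e, A e = true -> B e = false.

(* [T] = product of the elements of a (duplicate-free) list T *)
Definition bracket {E : Type} (T : list (subset E)) : subset E :=
  fold_right sdiff emptyset T.

Definition delta {E : Type} (A : subset E) (e : E) : R := if A e then 1 else 0.

Definition gliding_system {E : Type} (glide : subset E -> Prop)
  (indep : subset E -> subset E -> Prop) : Prop :=
  (forall s, glide s -> s <> emptyset) /\
  (forall s t, indep s t -> glide s /\ glide t) /\
  (forall s t, indep s t -> indep t s) /\
  (forall s t, indep s t -> sdiff s t = sdiff t s /\ sdiff s t <> emptyset).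

(* a cubic set of glides, represented by a duplicate-free list *)
Definition cubic {E : Type} (glide : subset E -> Prop)
  (indep : subset E -> subset E -> Prop) (S : list (subset E)) : Prop :=
  NoDup S /\
  (forall s, In s S -> glide s) /\
  (forall s t, In s S -> In t S -> s <> t -> indep s t) /\
  (forall T1 T2, NoDup T1 -> NoDup T2 -> incl T1 S -> incl T2 S ->
     ~ (forall s, In s T1 <-> In s T2) -> bracket T1 <> bracket T2).

(* a point (A, S, x); only the values of x on S are relevant *)
Definition point (E : Type) : Type :=
  (subset E * list (subset E) * (subset E -> R))%type.

Definition valid_pt {E : Type} (glide : subset E -> Prop)
  (indep : subset E -> subset E -> Prop) (p : point E) : Prop :=
  let '(A, SS, x) := p in
  cubic glide indep SS /\ (forall s, In s SS -> 0 <= x s <= 1).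

(* generating moves of the equivalence defining X_G *)
Definition gen_rel {E : Type} (glide : subset E -> Prop)
  (indep : subset E -> subset E -> Prop) (p q : point E) : Prop :=
  valid_pt glide indep p /\ valid_pt glide indep q /\
  (let '(A, SS, x) := p in let '(A', SS', x') := q in
   (A' = A /\ incl SS SS' /\ (forall s, In s SS -> x' s = x s) /\
      (forall s, In s SS' -> ~ In s SS -> x' s = 0))
   \/
   (SS' = SS /\ exists T : list (subset E), NoDup T /\ incl T SS /\
      A' = sdiff (bracket T) A /\
      (forall s, In s SS -> In s T -> x' s = 1 - x s) /\
      (forall s, In s SS -> ~ In s T -> x' s = x s))).

(* equality of points of X_G *)
Definition xequiv {E : Type} (glide : subset E -> Prop)
  (indep : subset E -> subset E -> Prop) : relation (point E) :=
  clos_refl_sym_trans (point E) (gen_rel glide indep).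

(* the cube I^S at A belongs to X_D: all its vertices [T]A lie in D *)
Definition cube_in {E : Type} (D : subset E -> Prop) (A : subset E)
  (S : list (subset E)) : Prop :=
  forall T, NoDup T -> incl T S -> D (sdiff (bracket T) A).

Definition in_XD {E : Type} (glide : subset E -> Prop)
  (indep : subset E -> subset E -> Prop) (D : subset E -> Prop) (p : point E) : Prop :=
  exists q : point E, xequiv glide indep p q /\ valid_pt glide indep q /\
    (let '(A, SS, _) := q in cube_in D A SS).

Definition omega {E : Type} (p : point E) (e : E) : R :=
  let '(A, SS, x) := p in
  delta A e + (1 - 2 * delta A e) *
    fold_right (fun s acc => x s * delta s e + acc) 0 SS.

From Stdlib Require Import Reals List Lra Relations Classical ClassicalEpsilon
  FunctionalExtensionality Bool.
Import ListNotations.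
Open Scope R_scope.

(** Since independent glides are disjoint, every point e of E lies in at most
    one glide of a cubic set S; hence [S] is the union of S and, writing
    [flip b r] for [if b then 1 - r else r],
        omega (A, S, x) e = flip (A e) (x s)   if e lies in the glide s of S,
        omega (A, S, x) e = delta A e          if e lies in no glide of S.
    From this description:
    1. omega is constant on the equivalence classes of X_G (both generating
       moves preserve it), so it is well defined;
    2. every point of X_D is represented by an "interior" point (A, S, x) of
       a cube of X_D, i.e. with 0 < x s < 1 for all s in S: reflect the
       coordinates equal to 1 and drop those equal to 0;
    3. for an interior point, [S] is exactly where omega takes values in
       (0, 1); so equal evaluations give equal brackets, hence (hypothesis on
       cubic sets) the same glides;
    4. two interior points over the same glides in cubes of X_D with equal
       evaluations differ by a single reflection: the splitting hypothesis on
       D forces A and B to agree on all of s or to differ on all of s. *)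

Section ClassicalFilter.
Context {X : Type}.

Definition filter_prop (P : X -> Prop) (L : list X) : list X :=
  filter (fun a => if excluded_middle_informative (P a) then true else false) L.

Lemma filter_prop_In (P : X -> Prop) (L : list X) (a : X) :
  In a (filter_prop P L) <-> In a L /\ P a.
Proof.
  unfold filter_prop. rewrite filter_In.
  destruct (excluded_middle_informative (P a)); intuition discriminate.
Qed.

Lemma filter_prop_NoDup (P : X -> Prop) (L : list X) :
  NoDup L -> NoDup (filter_prop P L).
Proof. apply NoDup_filter. Qed.

Lemma filter_prop_incl (P : X -> Prop) (L : list X) : incl (filter_prop P L) L.
Proof. intros a Ha. apply filter_prop_In in Ha. tauto. Qed.

End ClassicalFilter.

Section DisjointFamilies.
Variable E : Type.

Definition pairwise_disjoint (S : list (subset E)) : Prop :=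
  NoDup S /\ forall s t, In s S -> In t S -> s <> t -> set_disjoint s t.

Definition covers (S : list (subset E)) (e : E) : Prop :=
  exists s, In s S /\ s e = true.

Definition weight (x : subset E -> R) (S : list (subset E)) (e : E) : R :=
  fold_right (fun s acc => x s * delta s e + acc) 0 S.

Definition flip (b : bool) (r : R) : R := if b then 1 - r else r.

Lemma covering_unique (S : list (subset E)) (s t : subset E) (e : E) :
  pairwise_disjoint S -> In s S -> In t S -> s e = true -> t e = true -> s = t.
Proof.
  intros [_ Hdisj] Hs Ht Hse Hte.
  destruct (classic (s = t)) as [|Hst]; [assumption|].
  specialize (Hdisj s t Hs Ht Hst e Hse). congruence.
Qed.

Lemma pairwise_disjoint_incl (S T : list (subset E)) :
  pairwise_disjoint S -> NoDup T -> incl T S -> pairwise_disjoint T.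
Proof. intros [_ Hdisj] HT HTS. split; auto. Qed.

Lemma pairwise_disjoint_cons (a : subset E) (S : list (subset E)) :
  pairwise_disjoint (a :: S) -> pairwise_disjoint S.
Proof.
  intros HS. apply (pairwise_disjoint_incl (a :: S)); [exact HS | | intros t Ht; right; exact Ht].
  destruct HS as [Hnd _]. inversion Hnd. assumption.
Qed.

Lemma uncovered_false (S : list (subset E)) (e : E) (t : subset E) :
  ~ covers S e -> In t S -> t e = false.
Proof.
  intros Hn Ht. destruct (t e) eqn:Hte; [|reflexivity].
  exfalso. apply Hn. exists t. auto.
Qed.

Lemma covers_only_by (S T : list (subset E)) (s : subset E) (e : E) :
  pairwise_disjoint S -> In s S -> s e = true -> incl T S -> ~ In s T -> ~ covers T e.
Proof.
  intros HS Hs Hse HTS HsT [t [Ht Hte]].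
  apply HsT. rewrite (covering_unique S s t e); auto.
Qed.

Lemma bracket_covers (T : list (subset E)) (e : E) :
  pairwise_disjoint T -> (bracket T e = true <-> covers T e).
Proof.
  induction T as [|a T IH]; intros HT.
  - simpl. split; [discriminate | intros [t [[] _]]].
  - specialize (IH (pairwise_disjoint_cons a T HT)). simpl. unfold sdiff.
    destruct (a e) eqn:Hae; simpl.
    + destruct (bracket T e) eqn:Hb; simpl.
      * exfalso. destruct (proj1 IH eq_refl) as [t [Ht Hte]].
        assert (a = t) as <- by (apply (covering_unique (a :: T) a t e); simpl; auto).
        destruct HT as [Hnd _]. inversion Hnd. contradiction.
      * split; [intros _; exists a; simpl; auto | reflexivity].
    + rewrite IH. split.
      * intros [t [Ht Hte]]. exists t. simpl. auto.
      * intros [t [[<-|Ht] Hte]]; [congruence | exists t; auto].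
Qed.

Lemma bracket_uncovered (T : list (subset E)) (e : E) :
  ~ covers T e -> bracket T e = false.
Proof.
  induction T as [|a T IH]; intros Hn; [reflexivity|]. simpl. unfold sdiff.
  rewrite (uncovered_false (a :: T) e a Hn) by (simpl; auto).
  apply IH. intros [t [Ht Hte]]. apply Hn. exists t. simpl. auto.
Qed.

Lemma bracket_sub_at (S T : list (subset E)) (s : subset E) (e : E) :
  pairwise_disjoint S -> NoDup T -> incl T S -> In s S -> s e = true ->
  (bracket T e = true <-> In s T).
Proof.
  intros HS HT HTS Hs Hse.
  rewrite bracket_covers by (exact (pairwise_disjoint_incl S T HS HT HTS)).
  split.
  - intros Hc. apply NNPP. intros HsT. exact (covers_only_by S T s e HS Hs Hse HTS HsT Hc).
  - intros HsT. exists s. auto.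
Qed.

Lemma bracket_app (T U : list (subset E)) (e : E) :
  bracket (T ++ U) e = xorb (bracket T e) (bracket U e).
Proof.
  induction T as [|a T IH]; [reflexivity|]. simpl. unfold sdiff.
  rewrite IH. symmetry; apply xorb_assoc_reverse.
Qed.

Lemma weight_uncovered (x : subset E -> R) (S : list (subset E)) (e : E) :
  ~ covers S e -> weight x S e = 0.
Proof.
  induction S as [|a S IH]; intros Hn; [reflexivity|]. simpl.
  unfold delta at 1. rewrite (uncovered_false (a :: S) e a Hn) by (simpl; auto).
  change (fold_right _ 0 S) with (weight x S e).
  rewrite IH; [ring|]. intros [t [Ht Hte]]. apply Hn. exists t. simpl. auto.
Qed.

Lemma weight_covered (x : subset E -> R) (S : list (subset E)) (s : subset E) (e : E) :
  pairwise_disjoint S -> In s S -> s e = true -> weight x S e = x s.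
Proof.
  induction S as [|a S IH]; intros HS Hs Hse; [destruct Hs|]. simpl.
  change (fold_right _ 0 S) with (weight x S e).
  assert (HaS : ~ In a S) by (destruct HS as [Hnd _]; inversion Hnd; assumption).
  destruct Hs as [<-|Hs].
  - unfold delta. rewrite Hse, weight_uncovered; [ring|].
    apply (covers_only_by (a :: S) S a e HS (in_eq a S) Hse); [|exact HaS].
    intros t Ht. right. exact Ht.
  - unfold delta at 1. destruct (a e) eqn:Hae.
    + exfalso. apply HaS.
      rewrite (covering_unique (a :: S) a s e HS (in_eq a S) (in_cons a s S Hs) Hae Hse).
      exact Hs.
    + rewrite IH; [ring | exact (pairwise_disjoint_cons a S HS) | exact Hs | exact Hse].
Qed.

Lemma omega_flip (A : subset E) (S : list (subset E)) (x : subset E -> R) (e : E) :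
  omega (A, S, x) e = flip (A e) (weight x S e).
Proof. unfold omega, flip, weight, delta at 1 2. destruct (A e); ring. Qed.

Lemma flip_xorb (b c : bool) (r : R) : flip (xorb b c) r = flip b (flip c r).
Proof. destruct b, c; simpl; ring. Qed.

Lemma flip_cancel (b c : bool) (r r' : R) :
  flip b r = flip c r' -> r' = flip (xorb b c) r.
Proof. destruct b, c; simpl; lra. Qed.

Lemma omega_face (A : subset E) (S S' : list (subset E)) (x x' : subset E -> R) (e : E) :
  pairwise_disjoint S' -> NoDup S -> incl S S' ->
  (forall s, In s S -> x' s = x s) -> (forall s, In s S' -> ~ In s S -> x' s = 0) ->
  omega (A, S, x) e = omega (A, S', x') e.
Proof.
  intros HS' HS HSS' Hx Hx0. rewrite !omega_flip. f_equal.
  destruct (classic (covers S' e)) as [[s [Hs Hse]]|Hn].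
  - rewrite (weight_covered x' S' s e) by assumption.
    destruct (classic (In s S)) as [HsS|HsS].
    + rewrite (weight_covered x S s e); [symmetry; auto | | assumption | assumption].
      exact (pairwise_disjoint_incl S' S HS' HS HSS').
    + rewrite weight_uncovered, Hx0; auto.
      exact (covers_only_by S' S s e HS' Hs Hse HSS' HsS).
  - rewrite !weight_uncovered; [reflexivity | assumption |].
    intros [t [Ht Hte]]. apply Hn. exists t. auto.
Qed.

Lemma omega_reflect (A : subset E) (S T : list (subset E)) (x x' : subset E -> R) (e : E) :
  pairwise_disjoint S -> NoDup T -> incl T S ->
  (forall s, In s S -> In s T -> x' s = 1 - x s) ->
  (forall s, In s S -> ~ In s T -> x' s = x s) ->
  omega (A, S, x) e = omega (sdiff (bracket T) A, S, x') e.
Proof.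
  intros HS HT HTS Hin Hout. rewrite !omega_flip. unfold sdiff.
  rewrite xorb_comm, flip_xorb. f_equal.
  destruct (classic (covers S e)) as [[s [Hs Hse]]|Hn].
  - rewrite (weight_covered x S s e), (weight_covered x' S s e) by assumption.
    destruct (classic (In s T)) as [HsT|HsT].
    + rewrite (proj2 (bracket_sub_at S T s e HS HT HTS Hs Hse) HsT), Hin by assumption.
      simpl. ring.
    + rewrite bracket_uncovered by exact (covers_only_by S T s e HS Hs Hse HTS HsT).
      simpl. symmetry. auto.
  - rewrite bracket_uncovered, !weight_uncovered; try reflexivity; try assumption.
    intros [t [Ht Hte]]. apply Hn. exists t. auto.
Qed.

Lemma omega_interior (A : subset E) (S : list (subset E)) (x : subset E -> R) (e : E) :
  pairwise_disjoint S -> (forall s, In s S -> 0 < x s < 1) ->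
  (bracket S e = true <-> 0 < omega (A, S, x) e < 1).
Proof.
  intros HS Hx. rewrite bracket_covers, omega_flip by assumption. split.
  - intros [s [Hs Hse]]. rewrite (weight_covered x S s e) by assumption.
    specialize (Hx s Hs). unfold flip. destruct (A e); lra.
  - intros H. apply NNPP. intros Hn. rewrite weight_uncovered in H by assumption.
    unfold flip in H. destruct (A e); lra.
Qed.

Lemma omega_eq_on_member (A B : subset E) (S : list (subset E)) (x y : subset E -> R)
  (s : subset E) (e : E) :
  pairwise_disjoint S -> In s S -> s e = true ->
  omega (A, S, x) e = omega (B, S, y) e -> y s = flip (xorb (A e) (B e)) (x s).
Proof.
  intros HS Hs Hse Hom. apply flip_cancel.
  rewrite !omega_flip, (weight_covered x S s e), (weight_covered y S s e) in Hom
    by assumption.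
  exact Hom.
Qed.

Lemma omega_eq_off_members (A B : subset E) (S : list (subset E)) (x y : subset E -> R)
  (e : E) :
  ~ covers S e -> omega (A, S, x) e = omega (B, S, y) e -> B e = A e.
Proof.
  intros Hn Hom. rewrite !omega_flip, !weight_uncovered in Hom by exact Hn.
  destruct (A e), (B e); simpl in Hom; auto; lra.
Qed.

Lemma split_dichotomy (s s1 s2 A B : subset E) :
  set_disjoint s1 s2 -> set_union s1 s2 = s ->
  (set_inter s A = s1 \/ set_inter s A = s2) ->
  (set_inter s B = s1 \/ set_inter s B = s2) ->
  (forall e, s e = true -> A e = B e) \/ (forall e, s e = true -> A e <> B e).
Proof.
  intros H12 HU HA HB.
  destruct HA as [HA|HA], HB as [HB|HB]; [left|right|right|left]; intros e He;
    pose proof (equal_f HA e) as a; pose proof (equal_f HB e) as b;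
    pose proof (equal_f HU e) as u; pose proof (H12 e) as d;
    unfold set_inter, set_union in *; rewrite He in *; simpl in *;
    destruct (s1 e), (s2 e); simpl in *; try congruence;
    specialize (d eq_refl); discriminate.
Qed.

End DisjointFamilies.

Section GlideComplex.
Variable E : Type.
Variable glide : subset E -> Prop.
Variable indep : subset E -> subset E -> Prop.
Hypothesis Hdisj : forall s t, indep s t -> set_disjoint s t.

Lemma cubic_pairwise_disjoint (S : list (subset E)) :
  cubic glide indep S -> pairwise_disjoint E S.
Proof. intros [HS [_ [Hind _]]]. split; auto. Qed.

Lemma cubic_incl (S T : list (subset E)) :
  cubic glide indep S -> NoDup T -> incl T S -> cubic glide indep T.
Proof.
  intros [HS [Hgl [Hind Hbr]]] HT HTS. repeat split; auto.
  intros T1 T2 N1 N2 I1 I2. apply Hbr; auto; eapply incl_tran; eauto.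
Qed.

Lemma omega_gen_rel (p q : point E) :
  gen_rel glide indep p q -> forall e, omega p e = omega q e.
Proof.
  destruct p as [[A S] x], q as [[A' S'] x'].
  intros [[Vp _] [[Vq _] Hmove]] e.
  destruct Hmove as [[-> [HSS' [Hx Hx0]]] | [-> [T [HT [HTS [-> [Hin Hout]]]]]]].
  - apply omega_face; auto; [apply cubic_pairwise_disjoint; assumption | apply Vp].
  - apply omega_reflect; auto. apply cubic_pairwise_disjoint; assumption.
Qed.

Lemma omega_xequiv (p q : point E) :
  xequiv glide indep p q -> forall e, omega p e = omega q e.
Proof.
  induction 1; intros e.
  - eapply omega_gen_rel; eauto.
  - reflexivity.
  - symmetry; auto.
  - etransitivity; eauto.
Qed.

Lemma same_glides_step (A : subset E) (S S' : list (subset E)) (x : subset E -> R) :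
  valid_pt glide indep (A, S, x) -> valid_pt glide indep (A, S', x) ->
  (forall s, In s S <-> In s S') -> gen_rel glide indep (A, S, x) (A, S', x).
Proof.
  intros V V' Hsame. split; [exact V | split; [exact V' |]]. left.
  repeat split; auto.
  - intros s Hs. apply Hsame. exact Hs.
  - intros s Hs Hn. exfalso. apply Hn, Hsame. exact Hs.
Qed.

Variable D : subset E -> Prop.

Lemma cube_in_face (C : subset E) (S S0 T1 : list (subset E)) :
  cube_in D C S -> NoDup T1 -> incl T1 S -> incl S0 S ->
  (forall s, In s S0 -> ~ In s T1) -> cube_in D (sdiff (bracket T1) C) S0.
Proof.
  intros HC HT1 HT1S HS0S Hdj T HT HTS0.
  replace (sdiff (bracket T) (sdiff (bracket T1) C)) with (sdiff (bracket (T ++ T1)) C).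
  - apply HC.
    + apply NoDup_app; auto.
    + apply incl_app; [eapply incl_tran|]; eauto.
  - apply functional_extensionality; intro e. unfold sdiff.
    rewrite bracket_app. apply xorb_assoc.
Qed.

Lemma interior_representative (C : subset E) (S : list (subset E)) (z : subset E -> R) :
  valid_pt glide indep (C, S, z) -> cube_in D C S ->
  exists A S0 x, xequiv glide indep (C, S, z) (A, S0, x) /\
    valid_pt glide indep (A, S0, x) /\ cube_in D A S0 /\
    (forall s, In s S0 -> 0 < x s < 1).
Proof.
  intros [Hc Hz] HC.
  set (T1 := filter_prop (fun s => z s = 1) S).
  set (S0 := filter_prop (fun s => 0 < z s < 1) S).
  set (x := fun s => if Req_dec_T (z s) 1 then 0 else z s).
  assert (NS : NoDup S) by apply Hc.
  assert (HxS : forall s, In s S -> 0 <= x s <= 1).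
  { intros s Hs. unfold x. destruct (Req_dec_T (z s) 1); [lra | auto]. }
  assert (HS0S : incl S0 S) by apply filter_prop_incl.
  assert (Hc0 : cubic glide indep S0)
    by (apply (cubic_incl S); [exact Hc | apply filter_prop_NoDup, NS | exact HS0S]).
  assert (Hreflect : gen_rel glide indep (C, S, z) (sdiff (bracket T1) C, S, x)).
  { split; [split; auto | split; [split; auto |]]. right. split; [reflexivity|].
    exists T1. split; [apply filter_prop_NoDup, NS|].
    split; [apply filter_prop_incl|]. split; [reflexivity|]. split.
    - intros s Hs HsT. apply filter_prop_In in HsT. unfold x.
      destruct (Req_dec_T (z s) 1); lra.
    - intros s Hs HsT. unfold x. destruct (Req_dec_T (z s) 1); [|reflexivity].
      exfalso. apply HsT, filter_prop_In. auto. }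
  assert (Hface : gen_rel glide indep (sdiff (bracket T1) C, S0, x) (sdiff (bracket T1) C, S, x)).
  { split; [split; [exact Hc0 | intros s Hs; apply HxS, HS0S, Hs] |].
    split; [split; auto |]. left.
    split; [reflexivity|]. split; [exact HS0S|]. split; [intros; reflexivity|].
    intros s Hs HsS0. unfold x. destruct (Req_dec_T (z s) 1) as [|Hz1]; [reflexivity|].
    destruct (Req_dec_T (z s) 0) as [|Hz0]; [assumption|].
    exfalso. apply HsS0, filter_prop_In. specialize (Hz s Hs). split; [exact Hs | lra]. }
  exists (sdiff (bracket T1) C), S0, x. split; [|split; [|split]].
  - eapply rst_trans; [apply rst_step, Hreflect | apply rst_sym, rst_step, Hface].
  - split; [exact Hc0 | intros s Hs; apply HxS, HS0S, Hs].
  - apply (cube_in_face C S);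
      [exact HC | apply filter_prop_NoDup, NS | apply filter_prop_incl | exact HS0S |].
    intros s Hs HsT. apply filter_prop_In in Hs. apply filter_prop_In in HsT. lra.
  - intros s Hs. apply filter_prop_In in Hs. unfold x.
    destruct (Req_dec_T (z s) 1); lra.
Qed.

Lemma interior_same_glides (A B : subset E) (S T : list (subset E)) (x y : subset E -> R) :
  (forall S1 S2, cubic glide indep S1 -> cubic glide indep S2 ->
     ~ (forall s, In s S1 <-> In s S2) -> bracket S1 <> bracket S2) ->
  valid_pt glide indep (A, S, x) -> valid_pt glide indep (B, T, y) ->
  (forall s, In s S -> 0 < x s < 1) -> (forall s, In s T -> 0 < y s < 1) ->
  (forall e, omega (A, S, x) e = omega (B, T, y) e) ->
  forall s, In s S <-> In s T.
Proof.
  intros Hcub [HS _] [HT _] Hx Hy Hom.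
  assert (Hbr : bracket S = bracket T).
  { apply functional_extensionality; intro e.
    pose proof (omega_interior E A S x e (cubic_pairwise_disjoint S HS) Hx) as HSe.
    pose proof (omega_interior E B T y e (cubic_pairwise_disjoint T HT) Hy) as HTe.
    rewrite Hom in HSe. destruct (bracket S e), (bracket T e); try reflexivity.
    - symmetry. apply HTe, HSe. reflexivity.
    - apply HSe, HTe. reflexivity. }
  apply NNPP. intros Hn. exact (Hcub S T HS HT Hn Hbr).
Qed.

Hypothesis Hgs : gliding_system glide indep.

Definition splits_in (s : subset E) : Prop :=
  exists s1 s2 : subset E,
    s1 <> emptyset /\ s2 <> emptyset /\ set_disjoint s1 s2 /\ set_union s1 s2 = s /\
    (forall A, D A -> D (sdiff s A) -> set_inter s A = s1 \/ set_inter s A = s2).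

Hypothesis HD : forall s, glide s -> splits_in s.

Lemma cube_in_edge (A : subset E) (S : list (subset E)) (s : subset E) :
  cube_in D A S -> In s S -> D A /\ D (sdiff s A).
Proof.
  intros HA Hs. split.
  - exact (HA [] (NoDup_nil _) (incl_nil_l _)).
  - replace (sdiff s A) with (sdiff (bracket [s]) A).
    + apply HA; [repeat constructor; intros [] | intros t [<-|[]]; exact Hs].
    + apply functional_extensionality; intro e. unfold sdiff. simpl.
      unfold sdiff, emptyset. rewrite xorb_false_r. reflexivity.
Qed.

Lemma glide_nonempty (s : subset E) : glide s -> exists e, s e = true.
Proof.
  intros Hs. apply NNPP. intros Hn. apply (proj1 Hgs s Hs).
  apply functional_extensionality; intro e. unfold emptyset.
  destruct (s e) eqn:He; [exfalso; eauto | reflexivity].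
Qed.

Lemma agree_or_differ (A B : subset E) (S : list (subset E)) (s : subset E) :
  glide s -> In s S -> cube_in D A S -> cube_in D B S ->
  (forall e, s e = true -> A e = B e) \/ (forall e, s e = true -> A e <> B e).
Proof.
  intros Hgl Hs HA HB.
  destruct (HD s Hgl) as [s1 [s2 [_ [_ [H12 [HU Hsplit]]]]]].
  destruct (cube_in_edge A S s HA Hs) as [DA DsA].
  destruct (cube_in_edge B S s HB Hs) as [DB DsB].
  exact (split_dichotomy E s s1 s2 A B H12 HU (Hsplit A DA DsA) (Hsplit B DB DsB)).
Qed.

(** Two points over the same glides, in cubes of X_D, with equal evaluations
    are related by a single reflection move: reflect the glides on which the
    base vertices differ. *)
Lemma reflection_step (A B : subset E) (S : list (subset E)) (x y : subset E -> R) :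
  valid_pt glide indep (A, S, x) -> valid_pt glide indep (B, S, y) ->
  cube_in D A S -> cube_in D B S ->
  (forall e, omega (A, S, x) e = omega (B, S, y) e) ->
  gen_rel glide indep (A, S, x) (B, S, y).
Proof.
  intros VA VB HA HB Hom.
  assert (HS : pairwise_disjoint E S) by (apply cubic_pairwise_disjoint, VA).
  assert (Hglide : forall s, In s S -> glide s) by apply VA.
  set (T := filter_prop (fun s => exists e, s e = true /\ A e <> B e) S).
  assert (HT : NoDup T) by (apply filter_prop_NoDup, HS).
  assert (HTS : incl T S) by apply filter_prop_incl.
  assert (HbT : forall s e, In s S -> s e = true -> (bracket T e = true <-> In s T))
    by (intros s e; apply bracket_sub_at; assumption).
  assert (Honglide : forall s e, In s S -> s e = true -> B e = xorb (bracket T e) (A e)).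
  { intros s e Hs Hse. destruct (classic (In s T)) as [HsT|HsT].
    - rewrite (proj2 (HbT s e Hs Hse) HsT).
      apply filter_prop_In in HsT. destruct HsT as [_ [e1 [He1 Hne]]].
      destruct (agree_or_differ A B S s (Hglide s Hs) Hs HA HB) as [Hagree|Hdiff].
      + exfalso. exact (Hne (Hagree e1 He1)).
      + specialize (Hdiff e Hse). destruct (A e), (B e); simpl; congruence.
    - rewrite bracket_uncovered by exact (covers_only_by E S T s e HS Hs Hse HTS HsT).
      apply NNPP. intros Hne. apply HsT, filter_prop_In. split; [exact Hs|].
      exists e. split; [exact Hse | intros HAB; apply Hne; rewrite HAB; reflexivity]. }
  assert (Hcoord : forall s e, In s S -> s e = true -> y s = flip (bracket T e) (x s)).
  { intros s e Hs Hse. rewrite (omega_eq_on_member E A B S x y s e HS Hs Hse (Hom e)).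
    rewrite (Honglide s e Hs Hse). f_equal.
    destruct (A e), (bracket T e); reflexivity. }
  split; [exact VA | split; [exact VB |]]. right. split; [reflexivity|].
  exists T. split; [exact HT|]. split; [exact HTS|]. split; [|split].
  - apply functional_extensionality; intro e. unfold sdiff.
    destruct (classic (covers E S e)) as [[s [Hs Hse]]|Hn].
    + exact (Honglide s e Hs Hse).
    + rewrite bracket_uncovered by (intros [t [Ht Hte]]; apply Hn; exists t; auto).
      exact (omega_eq_off_members E A B S x y e Hn (Hom e)).
  - intros s Hs HsT. destruct (glide_nonempty s (Hglide s Hs)) as [e He].
    rewrite (Hcoord s e Hs He), (proj2 (HbT s e Hs He) HsT). reflexivity.
  - intros s Hs HsT. destruct (glide_nonempty s (Hglide s Hs)) as [e He].
    rewrite (Hcoord s e Hs He).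
    destruct (bracket T e) eqn:Hb; [exfalso; apply HsT, (HbT s e Hs He), Hb | reflexivity].
Qed.

End GlideComplex.

Theorem lemma10p1 (E : Type) (glide : subset E -> Prop)
  (indep : subset E -> subset E -> Prop) (D : subset E -> Prop)
  (Hgs : gliding_system glide indep)
  (Hdisj : forall s t, indep s t -> set_disjoint s t)
  (Hcub : forall S1 S2, cubic glide indep S1 -> cubic glide indep S2 ->
     ~ (forall s, In s S1 <-> In s S2) -> bracket S1 <> bracket S2)
  (HD : forall s, glide s -> exists s1 s2 : subset E,
     s1 <> emptyset /\ s2 <> emptyset /\ set_disjoint s1 s2 /\ set_union s1 s2 = s /\
     (forall A, D A -> D (sdiff s A) -> set_inter s A = s1 \/ set_inter s A = s2)) :
  forall p q : point E,
    valid_pt glide indep p -> valid_pt glide indep q ->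
    in_XD glide indep D p -> in_XD glide indep D q ->
    (forall e, omega p e = omega q e) ->
    xequiv glide indep p q.
Proof.
  intros p q _ _ [[[C S] z] [Hp [Vp Cp]]] [[[C' S'] z'] [Hq [Vq Cq]]] Hom.
  destruct (interior_representative E glide indep D C S z Vp Cp)
    as [A [S0 [x [HpA [VA [CA IA]]]]]].
  destruct (interior_representative E glide indep D C' S' z' Vq Cq)
    as [B [S1 [y [HqB [VB [CB IB]]]]]].
  assert (HpA' : xequiv glide indep p (A, S0, x)) by (eapply rst_trans; eauto).
  assert (HqB' : xequiv glide indep q (B, S1, y)) by (eapply rst_trans; eauto).
  assert (HomAB : forall e, omega (A, S0, x) e = omega (B, S1, y) e).
  { intro e. rewrite <- (omega_xequiv E glide indep Hdisj _ _ HpA' e),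
      <- (omega_xequiv E glide indep Hdisj _ _ HqB' e). apply Hom. }
  assert (Hsame : forall s, In s S0 <-> In s S1)
    by exact (interior_same_glides E glide indep Hdisj A B S0 S1 x y Hcub VA VB IA IB HomAB).
  assert (VB0 : valid_pt glide indep (B, S0, y)).
  { split; [apply VA | intros s Hs; apply VB, Hsame, Hs]. }
  assert (Hmove : gen_rel glide indep (B, S0, y) (B, S1, y))
    by exact (same_glides_step E glide indep B S0 S1 y VB0 VB Hsame).
  assert (Hreflect : gen_rel glide indep (A, S0, x) (B, S0, y)).
  { apply (reflection_step E glide indep Hdisj D Hgs HD); auto.
    - intros T HT HTS. apply CB; auto. intros s Hs. apply Hsame, HTS, Hs.
    - intro e. rewrite HomAB. symmetry. exact (omega_gen_rel E glide indep Hdisj _ _ Hmove e). }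
  eapply rst_trans; [exact HpA' |].
  eapply rst_trans; [apply rst_step, Hreflect |].
  eapply rst_trans; [apply rst_step, Hmove | apply rst_sym, HqB'].
Qed.
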